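(* Let $\Sigma$ be a finite alphabet and let $\mathbf w$ be a right-infinite word over $\Sigma$. Suppose there is a positive number $\kappa$ such that for each integer $b\ge1$ there is an integer $n=n(b)\ge 1$ with $L_{\mathbf w}(bn)\le\kappa$. Then $\#\mathrm{Per}(\mathbf w)\le\kappa$. In particular, if $L_{\mathbf w}$ is uniformly bounded, then $\mathrm{Per}(\mathbf w)$ is finite.
   Context: $\mathrm{Fac}(\mathbf u)$ denotes the set of finite factors (contiguous blocks) of a right-infinite word $\mathbf u$. Two words are cyclically equivalent if each is a cyclic shift of the other; $[v]_C$ is the class of $v$. $L_{\mathbf w}(n)=\#\{[v]_C : |v|=n,\ [v]_C\subseteq \mathrm{Fac}(\mathbf w)\}$. Call two right-infinite words equivalent ($\sim$) if they have the same set of finite factors. $\mathrm{Per}(\mathbf w)$ is the set of $\sim$-equivalence classes of right-infinite periodic words $v^\omega=vvv\cdots$ ($v$ nonempty) with $\mathrm{Fac}(v^\omega)\subseteq\mathrm{Fac}(\mathbf w)$. *)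

From mathcomp Require Import all_boot all_order all_algebra.
From mathcomp Require Import boolp classical_sets cardinality reals.
Set Implicit Arguments. Unset Strict Implicit. Unset Printing Implicit Defensive.
Import Order.TTheory GRing.Theory Num.Theory.
Local Open Scope classical_set_scope.

Definition Fac (Sigma : Type) (u : nat -> Sigma) : set (seq Sigma) :=
  [set v | exists i, v = mkseq (fun k => u (i + k)) (size v)].

(* The periodic word v^omega for the nonempty word v = x :: s. *)
Definition omega (Sigma : Type) (x : Sigma) (s : seq Sigma) : nat -> Sigma :=
  fun i => nth x (x :: s) (i %% size (x :: s)).

Definition word_equiv (Sigma : Type) (u u' : nat -> Sigma) : Prop := Fac u = Fac u'.

Definition cyc_class (Sigma : finType) (n : nat) (t : n.-tuple Sigma) : {set n.-tuple Sigma} :=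
  [set [tuple of rot k t] | k : 'I_n.+1].

Definition Lw (Sigma : finType) (w : nat -> Sigma) (n : nat) : nat :=
  #|[set cyc_class t | t in
      [set t : n.-tuple Sigma | `[< forall u, u \in cyc_class t -> Fac w (tval u) >] ] ]|.

Definition Per (Sigma : Type) (w : nat -> Sigma) : set (set (nat -> Sigma)) :=
  [set C | exists (x : Sigma) (s : seq Sigma),
      Fac (omega x s) `<=` Fac w /\ C = [set u | word_equiv u (omega x s)]].

From mathcomp Require Import all_boot all_order all_algebra.
From mathcomp Require Import boolp classical_sets cardinality reals.
From mathcomp Require Import zify.
Import Order.TTheory GRing.Theory Num.Theory.
Set Implicit Arguments. Unset Strict Implicit. Unset Printing Implicit Defensive.
Local Open Scope classical_set_scope.

(* Take k distinct classes of Per(w), represented by periodic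
   words v_i^omega, and let p_i = |v_i|.  Put b = p_1 ... p_k; the hypothesis
   gives n >= 1 with L_w(bn) <= kappa.  With N = bn every v_i^omega is
   N-periodic, so its length-N prefix t_i has its whole cyclic class inside
   Fac(w) (the rotations of t_i are prefixes of shifts of v_i^omega, which are
   factors of v_i^omega).  If t_i and t_j are cyclically equivalent, then
   v_j^omega is a shift of v_i^omega, hence has the same factors, so i = j.
   Hence the classes [t_i]_C are k distinct classes counted by L_w(N), and
   k <= kappa.  Finally, a set all of whose finite injective families have
   bounded size is the range of a maximal such family, which yields the bound
   #Per(w) <= m <= kappa and, a fortiori, the finiteness of Per(w). *)

Definition periodic (T : Type) (N : nat) (g : nat -> T) : Prop :=
  forall m, g (m + N) = g m.

Lemma periodicM (T : Type) (N : nat) (g : nat -> T) :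
  periodic N g -> forall m c, g (m + c * N) = g m.
Proof.
move=> gN m c; elim: c => [|c IH]; first by rewrite mul0n addn0.
by rewrite mulSn addnA addnAC gN.
Qed.

Lemma periodic_dvd (T : Type) (p N : nat) (g : nat -> T) :
  (p %| N)%N -> periodic p g -> periodic N g.
Proof. by case/dvdnP=> c -> gp m; apply: periodicM. Qed.

Lemma omega_periodic (Sigma : Type) (x : Sigma) (s : seq Sigma) :
  periodic (size (x :: s)) (omega x s).
Proof. by move=> m; rewrite /omega modnDr. Qed.

Lemma periodic_eq (T : Type) (N : nat) (g h : nat -> T) : (0 < N)%N ->
  periodic N g -> periodic N h -> (forall m, (m < N)%N -> g m = h m) -> g = h.
Proof.
move=> N0 gN hN E; apply: funext => m.
rewrite (divn_eq m N) addnC (periodicM gN) (periodicM hN).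
by apply: E; rewrite ltn_pmod.
Qed.

Lemma mkseq_cat (T : Type) (g : nat -> T) (a b : nat) :
  mkseq g (a + b) = mkseq g a ++ mkseq (fun j => g (a + j)) b.
Proof.
by rewrite /mkseq iotaD map_cat add0n -[in iota a _](addn0 a) iotaDl -map_comp.
Qed.

Lemma rot_periodic_block (T : Type) (N k : nat) (g : nat -> T) :
  periodic N g -> (k <= N)%N ->
  rot k (mkseq g N) = mkseq (fun j => g (k + j)) N.
Proof.
move=> gN kN.
have headE : mkseq g N = mkseq g k ++ mkseq (fun j => g (k + j)) (N - k).
  by rewrite -{1}(subnKC kN) mkseq_cat.
have shiftE : mkseq (fun j => g (k + j)) N =
              mkseq (fun j => g (k + j)) (N - k) ++ mkseq g k.
  rewrite -{1}(subnK kN) mkseq_cat; congr (_ ++ _); apply: eq_mkseq => j /=.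
  by rewrite addnA subnKC // addnC gN.
by rewrite headE shiftE -{1}(size_mkseq g k) rot_size_cat.
Qed.

Lemma Fac_shift (Sigma : Type) (N k : nat) (g : nat -> Sigma) : (0 < N)%N ->
  periodic N g -> Fac (fun l => g (k + l)) = Fac g.
Proof.
case: N => // N' _ gN; apply/seteqP; split => v [i vE].
  by exists (k + i); rewrite {1}vE; apply: eq_mkseq => j /=; rewrite addnA.
exists (i + N' * k); rewrite {1}vE; apply: eq_mkseq => j /=.
have -> : (k + (i + N' * k + j) = (i + j) + k * N'.+1)%N by nia.
by rewrite (periodicM gN).
Qed.

Definition block (Sigma : Type) (N : nat) (g : nat -> Sigma) : N.-tuple Sigma :=
  @Tuple N Sigma (mkseq g N) (introT eqP (size_mkseq g N)).

Lemma block_rot_Fac (Sigma : finType) (N : nat) (g : nat -> Sigma) (u : N.-tuple Sigma) :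
  periodic N g -> u \in cyc_class (block N g) -> Fac g (tval u).
Proof.
move=> gN /imsetP[k _ ->] /=; rewrite rot_periodic_block //; last first.
  by rewrite -ltnS ltn_ord.
by exists (k : nat); rewrite size_mkseq.
Qed.

(* Cyclically equivalent N-blocks of N-periodic words force equal factor sets:
   the second word is then a shift of the first. *)
Lemma block_cyc_Fac (Sigma : finType) (N : nat) (g h : nat -> Sigma) : (0 < N)%N ->
  periodic N g -> periodic N h -> block N h \in cyc_class (block N g) -> Fac h = Fac g.
Proof.
move=> N0 gN hN /imsetP[k _ /(congr1 val)] /=.
rewrite rot_periodic_block //; last by rewrite -ltnS ltn_ord.
move=> blockE.
have hE : h = (fun m => g (k + m)).
  apply: periodic_eq N0 hN _ _ => [m|m mN].
    by rewrite /= addnA gN.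
  have := congr1 (nth (h 0) ^~ m) blockE; rewrite !nth_mkseq //.
by rewrite hE; apply: Fac_shift N0 gN.
Qed.

Lemma distinct_periodic_le_Lw (Sigma : finType) (w : nat -> Sigma) (N k : nat)
    (g : 'I_k -> nat -> Sigma) :
  (0 < N)%N -> (forall i, periodic N (g i)) -> (forall i, Fac (g i) `<=` Fac w) ->
  (forall i j, Fac (g i) = Fac (g j) -> i = j) -> (k <= Lw w N)%N.
Proof.
move=> N0 gN gw gdistinct.
have class_inj : injective (fun i => cyc_class (block N (g i))).
  move=> i j /= classE; apply: gdistinct; apply/esym/(block_cyc_Fac N0) => //.
  by rewrite classE; apply/imsetP; exists ord0 => //; apply: val_inj; rewrite /= rot0.
rewrite /Lw -cardsE -[X in (X <= _)%N](card_ord k) -cardsT -(card_imset _ class_inj).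
apply: subset_leq_card; apply/fintype.subsetP => X /imsetP[i _ ->].
rewrite inE in_setE; exists (block N (g i)) => //.
by apply/asboolP => u /(block_rot_Fac (gN i)) /(gw i).
Qed.

Lemma Per_rep (Sigma : Type) (w : nat -> Sigma) (C : set (nat -> Sigma)) : Per w C ->
  {xs : Sigma * seq Sigma | Fac (omega xs.1 xs.2) `<=` Fac w /\
     C = [set u | word_equiv u (omega xs.1 xs.2)]}.
Proof. by move=> PC; apply: cid; case: PC => x [s PC]; exists (x, s). Qed.

Lemma Per_family_le (R : realType) (Sigma : finType) (w : nat -> Sigma) (kappa : R)
    (k : nat) (f : 'I_k -> set (nat -> Sigma)) :
  (forall b, (1 <= b)%N -> exists n, (1 <= n)%N /\ ((Lw w (b * n))%:R <= kappa)%R) ->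
  injective f -> (forall i, Per w (f i)) -> ((k%:R : R) <= kappa)%R.
Proof.
move=> hyp f_inj fPer.
pose r i := projT1 (Per_rep (fPer i)).
have rP i : Fac (omega (r i).1 (r i).2) `<=` Fac w /\
    f i = [set u | word_equiv u (omega (r i).1 (r i).2)].
  exact: projT2 (Per_rep (fPer i)).
pose g i := omega (r i).1 (r i).2.
pose b := (\prod_(i < k) size ((r i).1 :: (r i).2))%N.
have b_gt0 : (0 < b)%N by rewrite prodn_gt0.
have [n [n_gt0 Ln]] := hyp b b_gt0.
have N_gt0 : (0 < b * n)%N by rewrite muln_gt0 b_gt0.
have gN i : periodic (b * n) (g i).
  apply: periodic_dvd (omega_periodic _ _).
  by rewrite dvdn_mulr // /b (bigD1 i) //= dvdn_mulr.
have g_distinct i j : Fac (g i) = Fac (g j) -> i = j.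
  by move=> FE; apply: f_inj; rewrite (proj2 (rP i)) (proj2 (rP j)) /word_equiv FE.
have := distinct_periodic_le_Lw N_gt0 gN (fun i => proj1 (rP i)) g_distinct.
by rewrite -(ler_nat R) => /le_trans; apply.
Qed.

Lemma bounded_families_range (T : Type) (A : set T) (M : nat) :
  (forall k (f : 'I_k -> T), injective f -> (forall i, A (f i)) -> (k <= M)%N) ->
  exists m (f : 'I_m -> T), [/\ injective f, forall i, A (f i) & A `<=` range f].
Proof.
move=> bounded.
pose family k := exists f : 'I_k -> T, injective f /\ forall i, A (f i).
have family0 : exists k, `[< family k >].
  exists 0%N; apply/asboolP.
  by exists (fun i : 'I_0 => False_rect T (notF (ltn_ord i))); split; case.
have family_le k : `[< family k >] -> (k <= M)%N.
  by move=> /asboolP[f [f_inj fA]]; apply: bounded f_inj fA.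
case: (ex_maxnP family0 family_le) => m /asboolP[f [f_inj fA]] maximal.
exists m, f; split=> // C AC; apply: contrapT => notC.
pose f_ext (i : 'I_m.+1) := if unlift ord_max i is Some j then f j else C.
have f_ext_inj : injective f_ext.
  move=> i1 i2; rewrite /f_ext.
  case: unliftP => [j1 ->|->]; case: unliftP => [j2 ->|->] //.
  - by move/f_inj ->.
  - by move=> fjC; case: notC; exists j1.
  - by move=> fjC; case: notC; exists j2.
have f_extA i : A (f_ext i) by rewrite /f_ext; case: unliftP.
have : (m.+1 <= m)%N by apply: maximal; apply/asboolP; exists f_ext.
by rewrite ltnn.
Qed.

Lemma range_ord_card_le (T : Type) (m : nat) (f : 'I_m -> T) :
  (range f #<= `I_m)%card.
Proof.
apply: card_le_trans (card_image_le f setT) _.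
by have /card_eqPle[] := card_esym (@card_II m).
Qed.

Local Open Scope ring_scope.
Local Open Scope card_scope.

Theorem mainTheorem6 (R : realType) (Sigma : finType) (w : nat -> Sigma) (kappa : R) :
  0 < kappa ->
  (forall b : nat, (1 <= b)%N -> exists n : nat, (1 <= n)%N /\ (Lw w (b * n))%:R <= kappa) ->
  (exists m : nat, m%:R <= kappa /\ (Per w #<= `I_m)) /\
  ((exists K : nat, forall n : nat, (Lw w n <= K)%N) -> finite_set (Per w)).
Proof.
move=> kappa_gt0 hyp.
have family_le k (f : 'I_k -> _) : injective f -> (forall i, Per w (f i)) ->
    (k <= archimedean.Num.bound kappa)%N.
  move=> f_inj fPer.
  suff : (k%:R : R) < (archimedean.Num.bound kappa)%:R by rewrite ltr_nat => /ltnW.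
  apply: le_lt_trans (Per_family_le hyp f_inj fPer) _.
  exact: archimedean.Num.Theory.archi_boundP (ltW kappa_gt0).
have [m [f [f_inj fPer Per_range]]] := bounded_families_range family_le.
have Per_le : Per w #<= `I_m.
  exact: card_le_trans (subset_card_le Per_range) (range_ord_card_le f).
split; first by exists m; split=> //; apply: Per_family_le hyp f_inj fPer.
by move=> _; apply/finite_set_leP; exists m.
Qed.
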